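(* Let $m \ge n$, let $A$ be an $m \times n$ matrix with integer coefficients of full rank $n$, and let $b \in \mathbb{Z}^m$. Set $H = \max_{i,j}\left(|A_{ij}|, |b_i|\right)$. If $b$ is not orthogonal to the image of $A$, then \[ \kappa_{LS}(A,b) \le 3\, n^{\frac{n}{2}+1} m^{n+\frac{1}{2}} H^{2n+1}. \]
   Context: Norms are Euclidean $2$-norms. Let $x \in \mathbb{R}^n$ be the minimizer of $\|Ax-b\|^2$ (least squares solution), $r = Ax - b$ the residual, and $\theta \in [0,\pi/2]$ defined by $\sin\theta = \|r\|/\|b\|$. Let $\sigma_{\max}(A)$ and $\sigma_{\min}(A)$ be the largest and smallest singular values of $A$ and $\kappa(A) = \sigma_{\max}(A)/\sigma_{\min}(A)$. The condition number of the least squares problem is \[ \kappa_{LS}(A,b) = \frac{2\kappa(A)}{\cos\theta} + \tan\theta\,\kappa(A)^2 . \] *)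

From mathcomp Require Import all_boot all_order all_algebra.
From mathcomp Require Import all_classical all_reals all_analysis.
Set Implicit Arguments. Unset Strict Implicit. Unset Printing Implicit Defensive.
Import Order.TTheory GRing.Theory Num.Theory.
Local Open Scope ring_scope.
Local Open Scope classical_set_scope.

Definition norm2 {R : realType} {m : nat} (v : 'cV[R]_m) : R :=
  Num.sqrt (\sum_(i < m) (v i 0) ^+ 2).

Definition is_LS_solution {R : realType} {m n : nat}
  (A : 'M[R]_(m, n)) (b : 'cV[R]_m) (x : 'cV[R]_n) : Prop :=
  forall y : 'cV[R]_n, norm2 (A *m x - b) ^+ 2 <= norm2 (A *m y - b) ^+ 2.

Definition singular_values {R : realType} {m n : nat} (A : 'M[R]_(m, n)) : set R :=
  [set Num.sqrt a | a in [set a : R | eigenvalue (A^T *m A) a]].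

Definition sigma_max {R : realType} {m n : nat} (A : 'M[R]_(m, n)) : R :=
  sup (singular_values A).
Definition sigma_min {R : realType} {m n : nat} (A : 'M[R]_(m, n)) : R :=
  inf (singular_values A).
Definition kappa {R : realType} {m n : nat} (A : 'M[R]_(m, n)) : R :=
  sigma_max A / sigma_min A.

Definition LS_theta {R : realType} {m n : nat}
  (A : 'M[R]_(m, n)) (b : 'cV[R]_m) (x : 'cV[R]_n) : R :=
  asin (norm2 (A *m x - b) / norm2 b).

Definition kappa_LS {R : realType} {m n : nat}
  (A : 'M[R]_(m, n)) (b : 'cV[R]_m) (x : 'cV[R]_n) : R :=
  let th := LS_theta A b x in
  2 * kappa A / cos th + tan th * kappa A ^+ 2.

Definition height {m n : nat} (A : 'M[int]_(m, n)) (b : 'cV[int]_m) : int :=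
  Num.max (\big[Num.max/0]_(i < m) \big[Num.max/0]_(j < n) `|A i j|)
          (\big[Num.max/0]_(i < m) `|b i 0|).

From mathcomp Require Import all_boot all_order all_algebra.
From mathcomp Require Import all_classical all_reals all_analysis.
From mathcomp Require Import complex spectral.
From mathcomp Require Import ring lra.
Import Order.TTheory GRing.Theory Num.Theory.
Local Open Scope ring_scope.
Set Implicit Arguments. Unset Strict Implicit. Unset Printing Implicit Defensive.

(* The normal equations A^T (A x - b) = 0 make A x and A x - b orthogonal, so
   cos theta = |A x| / |b| and tan theta = |A x - b| / |A x|; since kappa(A)^2 is
   at most K = lambda_max / lambda_min for the eigenvalues of the Gram matrix
   M = A^T A, this gives kappa_LS <= 3 K |b| / |A x|.  For integer data,
   det M * |A x|^2 = (A^T b)^T adj(M) (A^T b) is a positive integer, whence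
   1 / |A x| <= sqrt (det M) <= det M.  Finally K * det M is the product of the
   eigenvalues with lambda_min replaced by lambda_max, which AM-GM bounds by
   (2 tr M / n)^n, and tr M <= n m H^2, |b| <= sqrt m H. *)

Section DotProduct.
Variable R : realFieldType.
Implicit Types (k : nat).

Definition dotv k (u v : 'cV[R]_k) : R := (u^T *m v) 0 0.
Definition sqnormv k (v : 'cV[R]_k) : R := dotv v v.

Lemma dotvE k (u v : 'cV[R]_k) : dotv u v = \sum_i u i 0 * v i 0.
Proof. by rewrite /dotv mxE; apply: eq_bigr => i _; rewrite mxE. Qed.

Lemma sqnormvE k (v : 'cV[R]_k) : sqnormv v = \sum_i v i 0 ^+ 2.
Proof. by rewrite /sqnormv dotvE; apply: eq_bigr => i _; rewrite expr2. Qed.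

Lemma dotvC k (u v : 'cV[R]_k) : dotv u v = dotv v u.
Proof. by rewrite !dotvE; apply: eq_bigr => i _; rewrite mulrC. Qed.

Lemma dotvDr k (u v w : 'cV[R]_k) : dotv u (v + w) = dotv u v + dotv u w.
Proof. by rewrite /dotv mulmxDr mxE. Qed.

Lemma dotvZr k t (u v : 'cV[R]_k) : dotv u (t *: v) = t * dotv u v.
Proof. by rewrite /dotv -scalemxAr mxE. Qed.

Lemma dotvNr k (u v : 'cV[R]_k) : dotv u (- v) = - dotv u v.
Proof. by rewrite /dotv mulmxN mxE. Qed.

Lemma dotv_mulmx m n (A : 'M[R]_(m, n)) u v : dotv u (A *m v) = dotv (A^T *m u) v.
Proof. by rewrite /dotv trmx_mul trmxK mulmxA. Qed.

Lemma sqnormvD k (u v : 'cV[R]_k) :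
  sqnormv (u + v) = sqnormv u + 2 * dotv u v + sqnormv v.
Proof. by rewrite /sqnormv !dotvDr ![dotv (u + v) _]dotvC !dotvDr (dotvC v u); ring. Qed.

Lemma sqnormvZ k t (v : 'cV[R]_k) : sqnormv (t *: v) = t ^+ 2 * sqnormv v.
Proof. by rewrite /sqnormv dotvZr dotvC dotvZr mulrA expr2. Qed.

Lemma sqnormv_ge0 k (v : 'cV[R]_k) : 0 <= sqnormv v.
Proof. by rewrite sqnormvE sumr_ge0 // => i _; rewrite sqr_ge0. Qed.

Lemma sqnormv_eq0 k (v : 'cV[R]_k) : (sqnormv v == 0) = (v == 0).
Proof.
apply/idP/eqP => [|->]; last by rewrite sqnormvE big1 // => i _; rewrite mxE expr0n.
rewrite sqnormvE psumr_eq0 => [/allP v0|i _]; last exact: sqr_ge0.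
apply/matrixP => i j; rewrite ord1 mxE.
by apply/eqP; rewrite -sqrf_eq0; exact: (v0 i (mem_index_enum _)).
Qed.

Lemma sqnormv_gt0 k (v : 'cV[R]_k) : (0 < sqnormv v) = (v != 0).
Proof. by rewrite lt_def sqnormv_ge0 sqnormv_eq0 andbT. Qed.

Lemma sqnormvB_orth k (u v : 'cV[R]_k) :
  dotv u v = 0 -> sqnormv (u - v) = sqnormv u + sqnormv v.
Proof.
move=> uv; rewrite sqnormvD dotvNr uv oppr0 mulr0 addr0.
by rewrite /sqnormv dotvNr dotvC dotvNr opprK.
Qed.

Lemma mxtrace_gram m n (A : 'M[R]_(m, n)) :
  \tr (A^T *m A) = \sum_(j < n) \sum_(i < m) A i j ^+ 2.
Proof.
rewrite /mxtrace; apply: eq_bigr => j _; rewrite mxE.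
by apply: eq_bigr => i _; rewrite mxE expr2.
Qed.

Lemma mxtrace_gram_ge0 m n (A : 'M[R]_(m, n)) : 0 <= \tr (A^T *m A).
Proof. by rewrite mxtrace_gram !sumr_ge0 // => j _; rewrite sumr_ge0 // => i _; rewrite sqr_ge0. Qed.

Lemma dotv_adj n (M : 'M[R]_n) x c : M *m x = c ->
  \det M * dotv c x = dotv c (\adj M *m c).
Proof. by move=> <-; rewrite mulmxA mul_adj_mx mul_scalar_mx dotvZr. Qed.

Lemma quadratic_ge0_lin_eq0 (a q : R) :
  0 <= q -> (forall t, 0 <= a * t + q * t ^+ 2) -> a = 0.
Proof.
move=> q0 aq; set t := - a / (q + 1).
have ta : a = - (t * (q + 1)).
  by rewrite /t !mulNr opprK divfK // gt_eqF // ltr_wpDl.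
have : 0 <= - t ^+ 2.
  by have := aq t; rewrite [in a * t]ta; congr (0 <= _); ring.
rewrite oppr_ge0 => t2; have t0 : t = 0.
  by apply/eqP; rewrite -sqrf_eq0 eq_le t2 sqr_ge0.
by rewrite ta t0 mul0r oppr0.
Qed.

End DotProduct.

Lemma mulmx_neq0_dim_gt0 (R : pzSemiRingType) m n (A : 'M[R]_(m, n)) (v : 'cV[R]_n) :
  A *m v != 0 -> (0 < n)%N.
Proof.
rewrite lt0n; apply: contra_neq => n0; apply/matrixP => i j.
by rewrite !mxE big1 // => k _; have : (k < 0)%N by rewrite -n0.
Qed.

Lemma norm2E (R : realType) k (v : 'cV[R]_k) : norm2 v = Num.sqrt (sqnormv v).
Proof. by rewrite /norm2 sqnormvE. Qed.

Lemma norm2_sqr (R : realType) k (v : 'cV[R]_k) : norm2 v ^+ 2 = sqnormv v.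
Proof. by rewrite norm2E sqr_sqrtr // sqnormv_ge0. Qed.

Lemma norm2_ge0 (R : realType) k (v : 'cV[R]_k) : 0 <= norm2 v.
Proof. exact: sqrtr_ge0. Qed.

Section LeastSquares.
Variables (R : realType) (m n : nat) (A : 'M[R]_(m, n)) (b : 'cV[R]_m) (x : 'cV[R]_n).
Hypothesis LSx : is_LS_solution A b x.

Lemma LS_normal_eq : A^T *m (A *m x - b) = 0.
Proof.
set r := A *m x - b; set z := A^T *m r.
suff : 2 * sqnormv z = 0.
  by move/eqP; rewrite mulf_eq0 pnatr_eq0 sqnormv_eq0 => /eqP.
apply: (@quadratic_ge0_lin_eq0 _ _ (sqnormv (A *m z))); first exact: sqnormv_ge0.
move=> t; have := LSx (x + t *: z); rewrite !norm2_sqr.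
have -> : A *m (x + t *: z) - b = r + t *: (A *m z).
  by rewrite mulmxDr -scalemxAr addrAC.
rewrite [sqnormv (r + _)]sqnormvD sqnormvZ dotvZr dotv_mulmx -/z -addrA lerDl.
by congr (0 <= _); rewrite /sqnormv; ring.
Qed.

Lemma LS_trmx_mul : A^T *m b = A^T *m (A *m x).
Proof. by apply/eqP; rewrite eq_sym -subr_eq0 -mulmxBr LS_normal_eq. Qed.

Lemma LS_pythagoras : sqnormv b = sqnormv (A *m x) + sqnormv (A *m x - b).
Proof.
rewrite -sqnormvB_orth; first by rewrite opprB addrC subrK.
by rewrite dotvC dotv_mulmx LS_normal_eq /dotv trmx0 mul0mx mxE.
Qed.

Lemma LS_proj_neq0 y : dotv b (A *m y) != 0 -> A *m x != 0.
Proof.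
apply: contraNneq => p0.
by rewrite dotv_mulmx LS_trmx_mul p0 mulmx0 /dotv trmx0 mul0mx mxE.
Qed.

End LeastSquares.

Lemma char_poly_conj (F : fieldType) n (P M : 'M[F]_n) : P \in unitmx ->
  char_poly (invmx P *m M *m P) = char_poly M.
Proof.
move=> Pu; rewrite /char_poly /char_poly_mx.
set Q := map_mx polyC P.
have Qu : Q \in unitmx by rewrite map_unitmx.
have -> : 'X%:M - map_mx polyC (invmx P *m M *m P)
          = invmx Q *m ('X%:M - map_mx polyC M) *m Q.
  rewrite !map_mxM map_invmx mulmxBr mulmxBl; congr (_ - _).
  by rewrite mul_mx_scalar -scalemxAl mulVmx // scalemx1.
by rewrite !det_mulmx det_inv mulrC mulrA divrr ?mul1r // -unitmxE.
Qed.

(* Over R[i], a real symmetric matrix is hermitian, hence unitarily similar to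
   a real diagonal matrix. *)
Lemma symmetric_char_poly_split (R : rcfType) n (M : 'M[R]_n) : M^T = M ->
  exists e : 'I_n -> R, char_poly M = \prod_(i < n) ('X - (e i)%:P).
Proof.
move=> Msym; pose f := real_complex R; pose Mc := map_mx f M.
have Mcsym : Mc \is symmetricmx.
  apply/is_hermitianmxP; rewrite expr0 scale1r.
  by apply/matrixP => i j; rewrite !mxE /= -[in RHS]Msym mxE.
have Mcreal : Mc \is a realmx.
  by apply/mxOverP => k l; rewrite mxE; apply/complex_realP; exists (M k l).
have Mch : Mc \is hermsymmx by apply: realsym_hermsym.
have /orthomx_spectralP Mceq := hermitian_normalmx Mch.
have dreal := hermitian_spectral_diag_real Mch.
set d := spectral_diag Mc in Mceq dreal.
exists (fun i => complex.Re (d 0 i)); apply: (@map_poly_inj _ _ f).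
rewrite map_char_poly -/Mc Mceq char_poly_conj ?spectral_unit //.
rewrite char_poly_trig ?diag_mx_is_trig // rmorph_prod; apply: eq_bigr => i _.
rewrite rmorphB /= map_polyX map_polyC /= mxE eqxx mulr1n.
by rewrite RRe_real // (mxOverP dreal).
Qed.

Section SplitCharPoly.
Variables (F : fieldType) (n : nat) (M : 'M[F]_n) (e : 'I_n -> F).
Hypothesis charM : char_poly M = \prod_(i < n) ('X - (e i)%:P).

Let ps := [seq e i | i <- enum 'I_n].

Let char_poly_seq : char_poly M = \prod_(a <- ps) ('X - a%:P).
Proof. by rewrite big_map big_enum. Qed.

Let size_ps : size ps = n.
Proof. by rewrite size_map size_enum_ord. Qed.

Lemma split_eigenvalueP a : eigenvalue M a <-> exists i, a = e i.
Proof.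
rewrite eigenvalue_root_char char_poly_seq root_prod_XsubC; split.
  by move=> /mapP [i _ ->]; exists i.
by move=> [i ->]; apply: map_f; rewrite mem_enum.
Qed.

Lemma split_det : \det M = \prod_i e i.
Proof.
have := char_poly_det M; rewrite char_poly_seq coef0_prod_XsubC size_ps.
by move=> /mulfI; rewrite signr_eq0 big_map big_enum => /(_ isT) <-.
Qed.

Lemma split_trace : \tr M = \sum_i e i.
Proof.
have [n0|n_gt0] := posnP n.
  by rewrite /mxtrace !big1 // => i; have : (i < 0)%N by rewrite -n0.
have := @coefPn_prod_XsubC _ ps; rewrite size_ps -char_poly_seq char_poly_trace //.
by rewrite -lt0n n_gt0 => /(_ isT) /oppr_inj ->; rewrite big_map big_enum.
Qed.

End SplitCharPoly.

Lemma gram_eigenvalue_gt0 (R : realFieldType) m n (A : 'M[R]_(m, n)) a :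
  \rank A = n -> eigenvalue (A^T *m A) a -> 0 < a.
Proof.
move=> rkA /eigenvalueP [v vM v0].
have rf : row_free A^T by rewrite /row_free mxrank_tr rkA.
have vT0 : v^T != 0 by rewrite -(inj_eq (@trmx_inj _ _ _)) trmxK trmx0.
have Av0 : A *m v^T != 0.
  apply: contra v0 => /eqP Av0; rewrite -(mulmx_free_eq0 _ rf).
  by rewrite -[v]trmxK -trmx_mul Av0 trmx0.
have sqnorm_Av : sqnormv (A *m v^T) = a * sqnormv v^T.
  have MvT : A^T *m A *m v^T = a *: v^T.
    have Msym : (A^T *m A)^T = A^T *m A by rewrite trmx_mul trmxK.
    by rewrite -[LHS]trmxK trmx_mul trmxK Msym vM linearZ.
  by rewrite /sqnormv dotv_mulmx mulmxA MvT dotvC dotvZr.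
by have := Av0; rewrite -sqnormv_gt0 sqnorm_Av pmulr_lgt0 // sqnormv_gt0.
Qed.

Lemma gram_spectrum (R : rcfType) m n (A : 'M[R]_(m, n)) : \rank A = n ->
  exists e : 'I_n -> R,
  [/\ forall i, 0 < e i,
      forall a, eigenvalue (A^T *m A) a <-> exists i, a = e i,
      \det (A^T *m A) = \prod_i e i &
      \tr (A^T *m A) = \sum_i e i].
Proof.
move=> rkA; have [e charM] : exists e : 'I_n -> R,
    char_poly (A^T *m A) = \prod_(i < n) ('X - (e i)%:P).
  by apply: symmetric_char_poly_split; rewrite trmx_mul trmxK.
exists e; split; [|exact: split_eigenvalueP|exact: split_det|exact: split_trace].
by move=> i; apply: (gram_eigenvalue_gt0 rkA); apply/(split_eigenvalueP charM); exists i.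
Qed.

Lemma det_gram_gt0 (R : rcfType) m n (A : 'M[R]_(m, n)) :
  \rank A = n -> 0 < \det (A^T *m A).
Proof.
by move=> /gram_spectrum [e [e_gt0 _ -> _]]; apply: prodr_gt0 => i _; apply: e_gt0.
Qed.

Lemma kappa_le_sqrt (R : realType) m n (A : 'M[R]_(m, n)) lo hi : 0 < lo ->
  (forall a, eigenvalue (A^T *m A) a -> lo <= a <= hi) ->
  eigenvalue (A^T *m A) hi -> 0 <= kappa A <= Num.sqrt (hi / lo).
Proof.
move=> lo_gt0 eig_bnd eig_hi.
have [ub lb] : ubound (singular_values A) (Num.sqrt hi) /\
               lbound (singular_values A) (Num.sqrt lo).
  split=> _ [a /eig_bnd /andP [loa ahi] <-].
    by rewrite ler_sqrt // (le_trans (ltW lo_gt0) (le_trans loa ahi)).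
  by rewrite ler_sqrt // (le_trans (ltW lo_gt0) loa).
have hi_sv : singular_values A (Num.sqrt hi) by exists hi.
have smax : sigma_max A = Num.sqrt hi.
  apply/eqP; rewrite eq_le ge_sup //=; last by exists (Num.sqrt hi).
  by apply: ub_le_sup => //; exists (Num.sqrt hi).
have smin : Num.sqrt lo <= sigma_min A by apply: lb_le_inf => //; exists (Num.sqrt hi).
have hi_gt0 : 0 < hi by have /andP [lohi _] := eig_bnd _ eig_hi; exact: lt_le_trans lohi.
have slo_gt0 : 0 < Num.sqrt lo by rewrite sqrtr_gt0.
have smin_gt0 : 0 < sigma_min A by apply: lt_le_trans smin.
rewrite /kappa smax divr_ge0 ?sqrtr_ge0 ?(ltW smin_gt0) //=.
rewrite sqrtrM ?sqrtrV ?(ltW hi_gt0) ?(ltW lo_gt0) //.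
by rewrite ler_pM2l ?sqrtr_gt0 // lef_pV2 ?posrE.
Qed.

Lemma sqrtr_le_self (R : rcfType) (a : R) : 1 <= a -> Num.sqrt a <= a.
Proof.
move=> a_ge1; have a_ge0 := le_trans ler01 a_ge1.
rewrite -{2}(sqr_sqrtr a_ge0) expr2 ler_peMr ?sqrtr_ge0 //.
by rewrite -sqrtr1 ler_sqrt.
Qed.

Section LSAngle.
Variables (R : realType) (m n : nat) (A : 'M[R]_(m, n)) (b : 'cV[R]_m) (x : 'cV[R]_n).
Hypothesis pythag : sqnormv b = sqnormv (A *m x) + sqnormv (A *m x - b).
Hypothesis Ax_neq0 : A *m x != 0.

Let Ax_gt0 : 0 < norm2 (A *m x).
Proof. by rewrite norm2E sqrtr_gt0 sqnormv_gt0. Qed.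

Let b_gt0 : 0 < norm2 b.
Proof.
by rewrite norm2E sqrtr_gt0 pythag ltr_pwDl ?sqnormv_ge0 ?sqnormv_gt0.
Qed.

Let sin_range : -1 <= norm2 (A *m x - b) / norm2 b <= 1.
Proof.
have r_le_b : norm2 (A *m x - b) <= norm2 b.
  by rewrite !norm2E ler_sqrt ?sqnormv_ge0 // pythag lerDr sqnormv_ge0.
rewrite ler_pdivrMr // mul1r r_le_b andbT.
by rewrite (le_trans _ (divr_ge0 (norm2_ge0 _) (ltW b_gt0))) // lerN10.
Qed.

Lemma sin_LS_theta : sin (LS_theta A b x) = norm2 (A *m x - b) / norm2 b.
Proof. by rewrite asinK // in_itv. Qed.

Lemma cos_LS_theta : cos (LS_theta A b x) = norm2 (A *m x) / norm2 b.
Proof.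
rewrite cos_asin // expr_div_n !norm2_sqr.
have -> : 1 - sqnormv (A *m x - b) / sqnormv b = sqnormv (A *m x) / sqnormv b.
  have b_neq0 : sqnormv b != 0 by rewrite -norm2_sqr expf_neq0 // gt_eqF.
  by apply: (mulIf b_neq0); rewrite mulrBl mul1r !divfK // pythag addrK.
by rewrite sqrtrM ?sqnormv_ge0 // sqrtrV ?sqnormv_ge0 // -!norm2E.
Qed.

Lemma tan_LS_theta : tan (LS_theta A b x) = norm2 (A *m x - b) / norm2 (A *m x).
Proof.
rewrite /tan sin_LS_theta cos_LS_theta invf_div mulrA divfK //.
by rewrite gt_eqF.
Qed.

Lemma kappa_LS_le K : 0 <= kappa A <= Num.sqrt K -> 1 <= K ->
  kappa_LS A b x <= 3 * K * (norm2 b / norm2 (A *m x)).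
Proof.
move=> /andP [k_ge0 k_le] K_ge1.
have K_ge0 : 0 <= K := le_trans ler01 K_ge1.
have k2_le : kappa A ^+ 2 <= K.
  by rewrite -(sqr_sqrtr K_ge0) lerXn2r ?nnegrE ?sqrtr_ge0.
set q := norm2 b / norm2 (A *m x).
have q_ge0 : 0 <= q by rewrite divr_ge0 ?norm2_ge0.
have tan_le : norm2 (A *m x - b) / norm2 (A *m x) <= q.
  rewrite ler_pM2r ?invr_gt0 //.
  by rewrite !norm2E ler_sqrt ?sqnormv_ge0 // pythag lerDr sqnormv_ge0.
rewrite /kappa_LS /= cos_LS_theta tan_LS_theta invf_div -/q.
have kq_le : kappa A * q <= K * q.
  by rewrite ler_wpM2r // (le_trans k_le (sqrtr_le_self K_ge1)).
have tk2_le : norm2 (A *m x - b) / norm2 (A *m x) * kappa A ^+ 2 <= q * K.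
  by apply: ler_pM; rewrite ?sqr_ge0 ?divr_ge0 ?norm2_ge0.
by rewrite -mulrA; lra.
Qed.

End LSAngle.

Definition agm_factor {R : numDomainType} n : R := if n == 1%N then 1 else 2.

Lemma agm_factor_ge0 (R : numDomainType) n : 0 <= agm_factor n :> R.
Proof. by rewrite /agm_factor; case: ifP. Qed.

(* Replacing the smallest factor [e imin] by the largest one turns the left-hand
   side into a product of [n] nonnegative reals whose sum exceeds [\sum_i e i] by
   at most [e imax <= \sum_i e i] (and not at all when [n = 1]); then apply AM-GM. *)
Lemma AGM_ratio_extremes (R : realFieldType) n (e : 'I_n -> R) imax imin :
  (forall i, 0 < e i) -> (forall i, e i <= e imax) -> (forall i, e imin <= e i) ->
  e imax / e imin * \prod_i e i
    <= (agm_factor n * (\sum_i e i) / n%:R) ^+ n.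
Proof.
move=> e_gt0 e_le_max e_ge_min.
pose g i := if i == imin then e imax else e i.
have g_ge0 i : 0 <= g i by rewrite /g; case: ifP => _; apply: ltW.
have g_off i : i != imin -> g i = e i by rewrite /g => /negbTE ->.
have prod_g : e imax / e imin * \prod_i e i = \prod_i g i.
  rewrite (bigD1 imin) //= [RHS](bigD1 imin) //= [g imin]/g eqxx.
  by rewrite mulrA mulfVK ?gt_eqF // (eq_bigr _ g_off).
have sum_g_le : \sum_i g i <= agm_factor n * \sum_i e i.
  have -> : \sum_i g i = \sum_i e i - e imin + e imax.
    rewrite (bigD1 imin) //= [X in _ = X - _ + _](bigD1 imin) //= [g imin]/g eqxx.
    by rewrite (eq_bigr _ g_off); ring.
  rewrite /agm_factor; case: eqP => [n1|_].
    have -> : imax = imin.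
      have [imax0 imin0] : (imax < 1)%N /\ (imin < 1)%N by rewrite -[1%N]n1.
      by apply: ord_inj; move: imax0 imin0; rewrite !ltnS !leqn0 => /eqP -> /eqP ->.
    by rewrite mul1r subrK.
  have e_max_le : e imax <= \sum_i e i.
    by rewrite (bigD1 imax) //= lerDl sumr_ge0 // => i _; apply: ltW.
  have := e_gt0 imin; lra.
have AGM : \prod_i g i <= ((\sum_i g i) / n%:R) ^+ n.
  have [AGM _] := leif_AGM (A := predT) (E := g) (fun i _ => g_ge0 i).
  by rewrite card_ord in AGM; exact: AGM.
rewrite prod_g (le_trans AGM) //.
have n_gt0 : (0 < n)%N := leq_ltn_trans (leq0n imin) (ltn_ord imin).
have e_sum_ge0 : 0 <= \sum_i e i by apply: sumr_ge0 => i _; apply: ltW.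
apply: lerXn2r; rewrite ?nnegrE.
- by apply: divr_ge0; rewrite ?sumr_ge0.
- by apply: divr_ge0; rewrite ?mulr_ge0 ?agm_factor_ge0.
- by rewrite ler_pM2r ?invr_gt0 ?ltr0n.
Qed.

Lemma agm_factor_expn_le (R : rcfType) n : (0 < n)%N ->
  (agm_factor n : R) ^+ n <= Num.sqrt n%:R ^+ n * n%:R.
Proof.
move=> n_gt0; rewrite /agm_factor; case: eqP => [->|n_neq1]; first by rewrite !expr1 sqrtr1 mul1r.
have n_ge2 : (2 <= n)%N by case: n n_gt0 n_neq1 => [|[|]].
rewrite -(@ler_pXn2r _ 2) // ?nnegrE ?mulr_ge0 ?exprn_ge0 ?sqrtr_ge0 //.
rewrite exprMn -!exprM mulnC !exprM sqr_sqrtr ?ler0n // -natrX -!natrX -natrM ler_nat.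
case: n n_ge2 {n_gt0 n_neq1} => [|[|[|[|n]]]] // _.
apply: (@leq_trans (n.+4 ^ n.+4)); first by rewrite leq_exp2r.
by rewrite leq_pmulr // expn_gt0.
Qed.

Lemma powR_half_add1 (R : realType) (a : R) k : 0 < a ->
  powR a (k%:R / 2 + 1) = Num.sqrt a ^+ k * a.
Proof.
move=> a_gt0; rewrite powRD ?gt_eqF ?implybT // powRr1 ?ltW //.
by rewrite [k%:R / 2]mulrC powRrM powR12_sqrt ?ltW // powR_mulrn ?sqrtr_ge0.
Qed.

Lemma powR_add_half (R : realType) (a : R) k : 0 < a ->
  powR a (k%:R + 2^-1) = a ^+ k * Num.sqrt a.
Proof.
by move=> a_gt0; rewrite powRD ?gt_eqF ?implybT // powR_mulrn ?powR12_sqrt ?ltW.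
Qed.

Lemma condition_bound_numeric (R : realType) m n (T B H : R) :
  (0 < n)%N -> (n <= m)%N -> 0 <= H ->
  0 <= T <= n%:R * m%:R * H ^+ 2 -> 0 <= B <= Num.sqrt m%:R * H ->
  3 * (agm_factor n * T / n%:R) ^+ n * B
    <= 3 * powR (n%:R : R) (n%:R / 2 + 1) * powR (m%:R : R) (n%:R + 2^-1)
       * H ^+ (2 * n + 1).
Proof.
move=> n_gt0 nm H_ge0 /andP [T_ge0 T_le] /andP [B_ge0 B_le].
have m_gt0 : (0 < m)%N := leq_trans n_gt0 nm.
rewrite powR_half_add1 ?ltr0n // powR_add_half ?ltr0n //.
have cn_le := agm_factor_expn_le R n_gt0.
set c : R := agm_factor n in cn_le *.
have c_ge0 : 0 <= c := agm_factor_ge0 R n.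
have cT_le : c * T / n%:R <= c * (m%:R * H ^+ 2).
  rewrite ler_pdivrMr ?ltr0n // -mulrA ler_wpM2l //.
  by rewrite [_ * n%:R]mulrC mulrA.
apply: (@le_trans _ _ (3 * (c * (m%:R * H ^+ 2)) ^+ n * (Num.sqrt m%:R * H))).
  apply: ler_pM => //; first by rewrite mulr_ge0 ?exprn_ge0 ?divr_ge0 ?mulr_ge0.
  apply: ler_wpM2l => //; apply: lerXn2r => //; rewrite nnegrE.
    by rewrite divr_ge0 ?mulr_ge0.
  by rewrite mulr_ge0 ?mulr_ge0 ?sqr_ge0.
set X := 3 * m%:R ^+ n * Num.sqrt m%:R * H ^+ (2 * n + 1).
have X_ge0 : 0 <= X by rewrite /X !mulr_ge0 ?exprn_ge0 ?sqrtr_ge0.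
have -> : 3 * (c * (m%:R * H ^+ 2)) ^+ n * (Num.sqrt m%:R * H) = c ^+ n * X.
  by rewrite /X !exprMn exprD expr1 mul2n -addnn exprD; ring.
have -> : 3 * (Num.sqrt n%:R ^+ n * n%:R) * (m%:R ^+ n * Num.sqrt m%:R)
          * H ^+ (2 * n + 1) = (Num.sqrt n%:R ^+ n * n%:R) * X.
  by rewrite /X; ring.
exact: ler_wpM2r.
Qed.

Lemma intr_gt0_ge1 (R : numDomainType) (z : int) : 0 < z%:~R :> R -> 1 <= z%:~R :> R.
Proof. by rewrite ltr0z ler1z gtz0_ge1. Qed.

Lemma intr_sqr_le (R : realDomainType) (z h : int) :
  `|z| <= h -> z%:~R ^+ 2 <= h%:~R ^+ 2 :> R.
Proof.
move=> zh; have h_ge0 : 0 <= h := le_trans (normr_ge0 z) zh.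
rewrite -real_normK ?realz // lerXn2r ?nnegrE ?normr_ge0 ?ler0z //.
by rewrite -intr_norm ler_int.
Qed.

Section IntegerData.
Variables (R : realType) (m n : nat) (A : 'M[int]_(m, n)) (b : 'cV[int]_m).
Local Notation AR := (map_mx (fun z : int => z%:~R : R) A).
Local Notation bR := (map_mx (fun z : int => z%:~R : R) b).
Local Notation H := ((height A b)%:~R : R).

Lemma height_ge0 : 0 <= height A b.
Proof. by rewrite le_max bigmax_ge_id. Qed.

Lemma normA_le_height i j : `|A i j| <= height A b.
Proof.
rewrite le_max; apply/orP; left.
by apply: le_trans (le_bigmax _ _ i); apply: (le_bigmax _ (fun j => `|A i j|) j).
Qed.

Lemma normb_le_height i : `|b i 0| <= height A b.
Proof. by rewrite le_max; apply/orP; right; apply: (le_bigmax _ (fun i => `|b i 0|) i). Qed.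

Lemma trace_gram_le_height : \tr (AR^T *m AR) <= n%:R * m%:R * H ^+ 2.
Proof.
rewrite mxtrace_gram; apply: (@le_trans _ _ (\sum_(j < n) \sum_(i < m) H ^+ 2)).
  apply: ler_sum => j _; apply: ler_sum => i _.
  by rewrite mxE; apply: intr_sqr_le; apply: normA_le_height.
by rewrite !sumr_const !card_ord -[(_ *+ m) *+ n]mulr_natl -[_ *+ m]mulr_natl mulrA.
Qed.

Lemma norm2_le_height : norm2 bR <= Num.sqrt m%:R * H.
Proof.
have H_ge0 : 0 <= H by rewrite ler0z height_ge0.
rewrite -(ger0_norm H_ge0) -sqrtr_sqr -sqrtrM ?ler0n //.
rewrite norm2E sqnormvE ler_sqrt ?mulr_ge0 ?ler0n ?sqr_ge0 //.
apply: (@le_trans _ _ (\sum_(i < m) H ^+ 2)).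
  by apply: ler_sum => i _; rewrite mxE; apply: intr_sqr_le; apply: normb_le_height.
by rewrite sumr_const card_ord mulr_natl.
Qed.

Hypothesis rkA : \rank AR = n.

Lemma det_gram_ge1 : 1 <= \det (AR^T *m AR).
Proof.
have := det_gram_gt0 rkA.
by rewrite map_trmx -map_mxM det_map_mx; apply: intr_gt0_ge1.
Qed.

Lemma det_gram_sqnormv_ge1 x : is_LS_solution AR bR x -> AR *m x != 0 ->
  1 <= \det (AR^T *m AR) * sqnormv (AR *m x).
Proof.
move=> LSx Ax_neq0.
have normal : AR^T *m AR *m x = AR^T *m bR by rewrite (LS_trmx_mul LSx) mulmxA.
have int_valued : \det (AR^T *m AR) * sqnormv (AR *m x)
    = (((A^T *m b)^T *m (\adj (A^T *m A) *m (A^T *m b))) 0 0)%:~R.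
  rewrite /sqnormv dotv_mulmx mulmxA normal (dotv_adj normal) /dotv.
  by rewrite !map_trmx -!map_mxM -map_mx_adj map_trmx -!map_mxM mxE.
have Ax_gt0 : 0 < sqnormv (AR *m x) by rewrite sqnormv_gt0.
have := mulr_gt0 (det_gram_gt0 rkA) Ax_gt0.
by rewrite int_valued; apply: intr_gt0_ge1.
Qed.

End IntegerData.

Lemma kappa_LS_le_trace (R : realType) m n (A : 'M[R]_(m, n)) b x :
  \rank A = n -> is_LS_solution A b x -> 1 <= \det (A^T *m A) ->
  1 <= \det (A^T *m A) * sqnormv (A *m x) ->
  kappa_LS A b x
    <= 3 * (agm_factor n * \tr (A^T *m A) / n%:R) ^+ n * norm2 b.
Proof.
move=> rkA LSx D_ge1 Ds_ge1; set D := \det (A^T *m A) in D_ge1 Ds_ge1 *.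
have D_gt0 : 0 < D := lt_le_trans ltr01 D_ge1.
have s_gt0 : 0 < sqnormv (A *m x).
  by rewrite -(pmulr_rgt0 _ D_gt0) (lt_le_trans ltr01 Ds_ge1).
have Ax_neq0 : A *m x != 0 by rewrite -sqnormv_gt0.
have [e [e_gt0 eigE detE trE]] := gram_spectrum rkA.
pose i0 := Ordinal (mulmx_neq0_dim_gt0 Ax_neq0).
have [imax _ max_e] := @arg_maxP _ _ _ i0 xpredT e isT.
have [imin _ min_e] := @arg_minP _ _ _ i0 xpredT e isT.
have e_le_max i : e i <= e imax := max_e i isT.
have e_ge_min i : e imin <= e i := min_e i isT.
set K := e imax / e imin.
have K_ge1 : 1 <= K by rewrite ler_pdivlMr // mul1r.
have kappa_le : 0 <= kappa A <= Num.sqrt K.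
  apply: kappa_le_sqrt => [||]; first exact: e_gt0.
    by move=> _ /eigE [i ->]; rewrite e_ge_min e_le_max.
  by apply/(eigE _); exists imax.
apply: le_trans (kappa_LS_le (LS_pythagoras LSx) Ax_neq0 kappa_le K_ge1) _.
have inv_le : (norm2 (A *m x))^-1 <= D.
  apply: le_trans (sqrtr_le_self D_ge1).
  rewrite norm2E -sqrtrV ?sqnormv_ge0 // ler_sqrt ?(ltW D_gt0) //.
  by rewrite -(ler_pM2r s_gt0) mulVf ?gt_eqF.
have KD_le : K * D <= (agm_factor n * \tr (A^T *m A) / n%:R) ^+ n.
  by rewrite /K /D detE trE; apply: AGM_ratio_extremes.
rewrite -mulrA -[3 * _ * norm2 b]mulrA ler_wpM2l //.
rewrite mulrCA [X in _ <= X]mulrC ler_wpM2l ?norm2_ge0 //.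
apply: le_trans KD_le; rewrite ler_wpM2l //.
exact: le_trans ler01 K_ge1.
Qed.

Theorem theorem2 (R : realType) (m n : nat) (A : 'M[int]_(m, n)) (b : 'cV[int]_m)
  (x : 'cV[R]_n) :
  (n <= m)%N ->
  \rank (map_mx (fun z : int => z%:~R : R) A) = n ->
  (exists y : 'cV[R]_n,
     ((map_mx (fun z : int => z%:~R : R) b)^T
        *m (map_mx (fun z : int => z%:~R : R) A *m y)) 0 0 != 0) ->
  is_LS_solution (map_mx (fun z : int => z%:~R : R) A)
                 (map_mx (fun z : int => z%:~R : R) b) x ->
  kappa_LS (map_mx (fun z : int => z%:~R : R) A)
           (map_mx (fun z : int => z%:~R : R) b) x
  <= 3 * powR (n%:R : R) (n%:R / 2 + 1) * powR (m%:R : R) (n%:R + 2^-1)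
       * ((height A b)%:~R : R) ^+ (2 * n + 1).
Proof.
move=> nm rkA [y by_neq0] LSx.
have Ax_neq0 := LS_proj_neq0 LSx by_neq0.
have Ds_ge1 := det_gram_sqnormv_ge1 rkA LSx Ax_neq0.
apply: le_trans (kappa_LS_le_trace rkA LSx (det_gram_ge1 rkA) Ds_ge1) _.
apply: condition_bound_numeric => //.
- exact: mulmx_neq0_dim_gt0 Ax_neq0.
- by rewrite ler0z height_ge0.
- by rewrite trace_gram_le_height mxtrace_gram_ge0.
- by rewrite norm2_le_height norm2_ge0.
Qed.
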